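(* Let $V$ be an irreducible Whittaker module of type $\eta$ over $R$ with cyclic Whittaker vector $w$. Then $\{H^iw : i\ge 0\}$ is a $\mathbb{C}$-basis of $V$.
   Context: Let $f\in\mathbb{C}[H]$ be a polynomial. $R=R(f)$ is the associative $\mathbb{C}$-algebra generated by $E,F,H$ with relations $EF-FE=f(H)$, $HE-EH=E$, $HF-FH=-F$. Let $R(E)=\mathbb{C}[E]$. Fix an algebra homomorphism $\eta:R(E)\to\mathbb{C}$ with $\eta(E)\neq0$. A vector $v$ of an $R$-module $V$ is a Whittaker vector of type $\eta$ if $Ev=\eta(E)v$; $V$ is a Whittaker module of type $\eta$ with cyclic Whittaker vector $w$ if $w$ is a Whittaker vector and $V=Rw$. *)

From HB Require Import structures.
From mathcomp Require Import all_boot all_order all_algebra.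
From mathcomp Require Import reals.
From mathcomp.real_closed Require Import complex.
Set Implicit Arguments. Unset Strict Implicit. Unset Printing Implicit Defensive.
Import Order.TTheory GRing.Theory Num.Theory.
Local Open Scope ring_scope.

(* The complex numbers: C = R[i] for R a (the) complete archimedean real field. *)

Section WhittakerDefs.
Variables (K : fieldType) (V : lmodType K).

Definition poly_op (p : {poly K}) (T : V -> V) (v : V) : V :=
  \sum_(i < size p) p`_i *: iter i T v.

(* (V, E, F, H) is a module over R(f) = C<E,F,H>/(EF-FE=f(H), HE-EH=E, HF-FH=-F):
   E, F, H are linear endomorphisms of V satisfying the defining relations. *)
Definition R_module (f : {poly K}) (E F H : {linear V -> V}) : Prop :=
  (forall v, E (F v) - F (E v) = poly_op f H v) /\
  (forall v, H (E v) - E (H v) = E v) /\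
  (forall v, H (F v) - F (H v) = - F v).

Definition R_submodule (E F H : V -> V) (S : V -> Prop) : Prop :=
  [/\ S 0, (forall u v, S u -> S v -> S (u + v)),
      (forall (c : K) v, S v -> S (c *: v)) &
      [/\ forall v, S v -> S (E v), forall v, S v -> S (F v)
        & forall v, S v -> S (H v)]].

Inductive cyc (E F H : V -> V) (w : V) : V -> Prop :=
  | cyc_w : cyc E F H w w
  | cyc_add u v : cyc E F H w u -> cyc E F H w v -> cyc E F H w (u + v)
  | cyc_scale (c : K) v : cyc E F H w v -> cyc E F H w (c *: v)
  | cyc_E v : cyc E F H w v -> cyc E F H w (E v)
  | cyc_F v : cyc E F H w v -> cyc E F H w (F v)
  | cyc_H v : cyc E F H w v -> cyc E F H w (H v).

Definition irreducible_R (E F H : V -> V) : Prop :=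
  (exists v : V, v != 0) /\
  forall S, R_submodule E F H S -> (forall v, S v -> v = 0) \/ (forall v, S v).

(* Whittaker vector of type eta, where eta : C[E] -> C is determined by
   the scalar a = eta(E). *)
Definition whittaker_vector (E : V -> V) (a : K) (v : V) : Prop := E v = a *: v.

Definition whittaker_module (E F H : V -> V) (a : K) (w : V) : Prop :=
  whittaker_vector E a w /\ forall v, cyc E F H w v.

Definition is_basis (b : nat -> V) : Prop :=
  (forall n (c : 'I_n -> K), \sum_(i < n) c i *: b i = 0 -> forall i, c i = 0) /\
  (forall v, exists n (c : 'I_n -> K), v = \sum_(i < n) c i *: b i).

End WhittakerDefs.

From HB Require Import structures.
From mathcomp Require Import all_boot all_order all_algebra.
From mathcomp Require Import reals.
From mathcomp.real_closed Require Import complex.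
Set Implicit Arguments.
Unset Strict Implicit.
Unset Printing Implicit Defensive.

Import Order.TTheory GRing.Theory Num.Theory.
Local Open Scope ring_scope.

(* The Casimir element Ω = FE + u(H), with u(H) - u(H-1) = f(H), commutes with
   E, F and H, and V = Rw is spanned by the vectors Ω^k H^j w. The image of Ω is
   a submodule, so either Ω = 0 or w = Ω Q(Ω, H) w for some Q. In the latter case
   E - η(E) acts on the K[H]-coefficients of a relation Q(Ω, H) w = 0 by the
   difference operator p ↦ p(H) - p(H-1), which lowers degrees; iterating it
   produces q(Ω) w = 0 with q ≠ 0. Hence Ω has an eigenvector, its eigenspace is a
   nonzero submodule, and Ω acts by a scalar λ. Then F w = η(E)^-1 (λ - u(H)) w,
   so V = K[H] w; and if p(H) w = 0, applying E - η(E) shows that the difference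
   of p kills w as well, so by induction on the degree p is constant, hence 0. *)

Section PolyOp.
Variables (K : fieldType) (V : lmodType K).
Implicit Types (p q : {poly K}) (x : V).

Lemma poly_op_widen (T : V -> V) p n x : (size p <= n)%N ->
  poly_op p T x = \sum_(i < n) p`_i *: iter i T x.
Proof.
move=> le_p_n; rewrite /poly_op (big_ord_widen n (fun i => p`_i *: iter i T x) le_p_n).
rewrite big_mkcond; apply: eq_bigr => i _ /=.
by case: ltnP => // le_p_i; rewrite nth_default // scale0r.
Qed.

Lemma poly_opD (T : V -> V) p q x :
  poly_op (p + q) T x = poly_op p T x + poly_op q T x.
Proof.
pose n := maxn (size p) (size q).
rewrite !(@poly_op_widen _ _ n) ?leq_maxl ?leq_maxr ?(leq_trans (size_polyD _ _)) //.
by rewrite -big_split; apply: eq_bigr => i _; rewrite coefD scalerDl.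
Qed.

Lemma poly_opZ (T : V -> V) (c : K) p x : poly_op (c *: p) T x = c *: poly_op p T x.
Proof.
rewrite (@poly_op_widen _ _ (size p)) ?size_scale_leq // /poly_op scaler_sumr.
by apply: eq_bigr => i _; rewrite coefZ scalerA.
Qed.

Lemma poly_opB (T : V -> V) p q x :
  poly_op (p - q) T x = poly_op p T x - poly_op q T x.
Proof. by rewrite poly_opD -[- q]scaleN1r poly_opZ scaleN1r. Qed.

Lemma poly_opC (T : V -> V) (c : K) x : poly_op c%:P T x = c *: x.
Proof. by rewrite (@poly_op_widen _ _ 1) ?size_polyC_leq1 // big_ord1 coefC. Qed.

Lemma poly_op0 (T : V -> V) x : poly_op 0 T x = 0.
Proof. by rewrite -[0]polyC0 poly_opC scale0r. Qed.

Lemma poly_op1 (T : V -> V) x : poly_op 1 T x = x.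
Proof. by rewrite -polyC1 poly_opC scale1r. Qed.

Lemma poly_opMX (T : V -> V) p x : poly_op (p * 'X) T x = poly_op p T (T x).
Proof.
rewrite (@poly_op_widen _ _ (size p).+1); last first.
  by have [->|p_neq0] := eqVneq p 0; rewrite ?mul0r ?size_poly0 ?size_mulX.
rewrite big_ord_recl coefMX /= scale0r add0r.
by apply: eq_bigr => i _; rewrite coefMX -iterSr.
Qed.

Lemma poly_opX (T : V -> V) x : poly_op 'X T x = T x.
Proof. by rewrite -['X]mul1r poly_opMX poly_op1. Qed.

Lemma iter_commute (S T : V -> V) n x :
  (forall y, S (T y) = T (S y)) -> S (iter n T x) = iter n T (S x).
Proof. by move=> ST; elim: n => //= n <-; rewrite ST. Qed.

Lemma is_basis_iter (T : V -> V) x :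
  (forall p, poly_op p T x = 0 -> p = 0) ->
  (forall v, exists p, v = poly_op p T x) ->
  is_basis (fun n => iter n T x).
Proof.
move=> inj span; split=> [[|n] c sum_eq0 i|v]; first by case: i.
  have /inj/(congr1 (fun p => p`_i)) : poly_op (\poly_(j < n.+1) c (inord j)) T x = 0.
    rewrite (@poly_op_widen _ _ n.+1) ?size_poly // -[RHS]sum_eq0.
    by apply: eq_bigr => j _; rewrite coef_poly ltn_ord inord_val.
  by rewrite coef_poly ltn_ord inord_val coef0.
by have [p ->] := span v; exists (size p), (fun i => p`_i).
Qed.

Section LinearOperator.
Variable T : {linear V -> V}.

Fact iter_is_linear n : linear (iter n T).
Proof. by elim: n => [|n IH] c x y //=; rewrite IH linearP. Qed.
HB.instance Definition _ n :=
  GRing.isLinear.Build K V V *:%R (iter n T) (iter_is_linear n).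

Fact poly_op_is_linear p : linear (poly_op p T).
Proof.
move=> c x y; rewrite /poly_op scaler_sumr -big_split.
by apply: eq_bigr => i _; rewrite linearP scalerDr !scalerA mulrC.
Qed.
HB.instance Definition _ p :=
  GRing.isLinear.Build K V V *:%R (poly_op p T) (poly_op_is_linear p).

Lemma poly_op_commute (S : {linear V -> V}) p x :
  (forall y, S (T y) = T (S y)) -> S (poly_op p T x) = poly_op p T (S x).
Proof.
move=> ST; rewrite linear_sum; apply: eq_bigr => i _.
by rewrite linearZ iter_commute.
Qed.

Lemma poly_opM p q x : poly_op (p * q) T x = poly_op p T (poly_op q T x).
Proof.
elim/poly_ind: p x => [|p c IH] x; first by rewrite mul0r !poly_op0.
rewrite mulrDl -mulrA [_ * q]mulrC mulrA poly_opD poly_opMX IH mul_polyC.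
by rewrite poly_opZ poly_opD poly_opMX poly_opC (@poly_op_commute T q).
Qed.

Lemma poly_op_shift (S : {linear V -> V}) (c : K) p x :
  (forall y, S (T y) = T (S y) + c *: S y) ->
  S (poly_op p T x) = poly_op (p \Po ('X + c%:P)) T (S x).
Proof.
move=> ST; elim/poly_ind: p x => [|p d IH] x.
  by rewrite comp_poly0 !poly_op0 linear0.
rewrite poly_opD poly_opMX poly_opC linearD linearZ IH ST.
rewrite comp_polyD comp_polyM comp_polyX comp_polyC poly_opD poly_opC poly_opM.
by rewrite poly_opD poly_opX poly_opC.
Qed.

End LinearOperator.

End PolyOp.

Lemma poly_op_eigenvector (K : closedFieldType) (V : lmodType K)
    (T : {linear V -> V}) (q : {poly K}) (x : V) :
  q != 0 -> x != 0 -> poly_op q T x = 0 -> exists lam y, y != 0 /\ T y = lam *: y.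
Proof.
elim: {q}(size q) {-2}q (erefl (size q)) x => [|n IH] q size_q x q_neq0 x_neq0 qx0.
  by move: q_neq0; rewrite -size_poly_eq0 size_q.
have [size_q1|] := eqVneq (size q) 1.
  move: qx0 q_neq0; rewrite (size1_polyC (eq_leq size_q1)) poly_opC => /eqP.
  by rewrite scaler_eq0 (negbTE x_neq0) orbF polyC_eq0 => ->.
move=> /closed_rootP[lam /factor_theorem[q' q_eq]].
have q'_neq0 : q' != 0 by apply: contraNneq q_neq0 => q'0; rewrite q_eq q'0 mul0r.
move: qx0; rewrite q_eq mulrC poly_opM poly_opB poly_opX poly_opC.
have [q'x0|q'x_neq0] := eqVneq (poly_op q' T x) 0.
  move=> _; apply: (IH q' _ x) => //.
  by apply: succn_inj; rewrite -size_q q_eq size_Mmonic ?monicXsubC // size_XsubC addn2.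
by move/eqP; rewrite subr_eq0 => /eqP Tq'x; exists lam, (poly_op q' T x).
Qed.

Section Submodules.
Variables (K : fieldType) (V : lmodType K) (E F H : {linear V -> V}).

Lemma R_submodule_cyc (S : V -> Prop) w :
  R_submodule E F H S -> S w -> forall v, cyc E F H w v -> S v.
Proof.
move=> [_ SD SZ [SE SF SH]] Sw v; elim=> //.
- by move=> x y _ Sx _ Sy; apply: SD.
- by move=> c x _ Sx; apply: SZ.
- by move=> x _ Sx; apply: SE.
- by move=> x _ Sx; apply: SF.
- by move=> x _ Sx; apply: SH.
Qed.

Lemma cyclic_generator_neq0 w :
  irreducible_R E F H -> (forall v, cyc E F H w v) -> w != 0.
Proof.
move=> [[v v_neq0] _] cyc_w; apply: contraNneq v_neq0 => w0.
apply/eqP; apply: (@R_submodule_cyc (fun x => x = 0) w) (cyc_w v) => //.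
by split=> [||c x ->|]; [|move=> x y -> ->|rewrite scaler0|split=> x ->];
  rewrite ?addr0 ?linear0.
Qed.

Section Central.
Variable C : {linear V -> V}.
Hypotheses (CE : forall v, C (E v) = E (C v)) (CF : forall v, C (F v) = F (C v))
  (CH : forall v, C (H v) = H (C v)).

Lemma image_R_submodule : R_submodule E F H (fun v => exists x, v = C x).
Proof.
split=> [|u v [x ->] [y ->]|c v [x ->]|]; first by exists 0; rewrite linear0.
- by exists (x + y); rewrite linearD.
- by exists (c *: x); rewrite linearZ.
by split=> v [x ->]; [exists (E x); rewrite CE|exists (F x); rewrite CF|
  exists (H x); rewrite CH].
Qed.

Lemma eigenspace_R_submodule lam : R_submodule E F H (fun v => C v = lam *: v).
Proof.
split=> [|u v Cu Cv|c v Cv|]; first by rewrite linear0 scaler0.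
- by rewrite linearD Cu Cv scalerDr.
- by rewrite scalerA mulrC -scalerA -Cv linearZ.
by split=> v Cv; rewrite ?CE ?CF ?CH Cv linearZ.
Qed.

Lemma central_eigenvector_scalar lam y :
  irreducible_R E F H -> y != 0 -> C y = lam *: y -> forall v, C v = lam *: v.
Proof.
move=> [_ irr] y_neq0 Cy; have [y0|//] := irr _ (eigenspace_R_submodule lam).
by move: y_neq0; rewrite (y0 y Cy) eqxx.
Qed.

End Central.
End Submodules.

Section Difference.
Context {K : numFieldType}.
Implicit Types p q : {poly K}.

Definition delta p := p - (p \Po ('X - 1)).

Fact delta_is_linear : linear delta.
Proof. by move=> c p q; rewrite /delta linearP /= scalerBr opprD addrACA. Qed.
HB.instance Definition _ :=
  GRing.isLinear.Build K {poly K} {poly K} *:%R delta delta_is_linear.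

Lemma size_sub_lead p q : size p = size q -> lead_coef p = lead_coef q ->
  (size (p - q)%R <= (size p).-1)%N.
Proof.
move=> eq_size eq_lead; apply/leq_sizeP => j; rewrite leq_eqVlt coefB.
case/predU1P => [<-|lt_j].
  by move: eq_lead; rewrite /lead_coef eq_size => ->; rewrite subrr.
by rewrite !nth_default ?subrr // -?eq_size; case: (size p) lt_j.
Qed.

Lemma size_delta p : (size (delta p) <= (size p).-1)%N.
Proof.
apply: size_sub_lead; first by rewrite size_comp_poly2 ?size_XsubC.
by rewrite lead_coef_comp ?size_XsubC // lead_coefXsubC expr1n mulr1.
Qed.

Lemma delta_eq0 p : delta p = 0 -> (size p <= 1)%N.
Proof.
move/eqP; rewrite subr_eq0 => /eqP p_shift.
pose q := p - (p`_0)%:P.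
have q_shift : q \Po ('X - 1) = q by rewrite linearB /= comp_polyC -p_shift.
have q_roots k : root q (- k%:R).
  elim: k => [|k IH]; first by rewrite oppr0 /root /q !hornerE horner_coef0 subrr.
  by move: IH; rewrite -{1}q_shift /root horner_comp !hornerE -opprD natr1.
have q0 : q = 0.
  apply: (@roots_geq_poly_eq0 _ _ [seq - k%:R | k <- iota 0 (size q)]).
  - by apply/allP => _ /mapP[k _ ->].
  - by rewrite map_inj_uniq ?iota_uniq // => m n /oppr_inj/eqP; rewrite eqr_nat => /eqP.
  - by rewrite size_map size_iota.
by move/eqP: q0; rewrite subr_eq0 => /eqP ->; rewrite size_polyC_leq1.
Qed.

Fixpoint rising k : {poly K} :=
  if k is k'.+1 then rising k' * ('X + k'%:R%:P) else 1.

Lemma rising_monic k : rising k \is monic.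
Proof. by elim: k => [|k IH] /=; rewrite ?monic1 ?monicMr ?monicXaddC. Qed.

Lemma size_rising k : size (rising k) = k.+1.
Proof.
elim: k => [|k IH] /=; first by rewrite size_poly1.
by rewrite size_Mmonic ?monicXaddC ?monic_neq0 ?rising_monic // IH size_XaddC addn2.
Qed.

Lemma rising_shift k : rising k.+1 \Po ('X - 1) = ('X - 1) * rising k.
Proof.
elim: k => [|k IH]; first by rewrite /= mul1r mulr1 polyC0 addr0 comp_polyX.
rewrite [rising k.+2]/= comp_polyM IH -mulrA comp_polyD comp_polyX comp_polyC.
by rewrite -addrA -polyCN -polyCD -natr1 [-1 + _]addrC addrK.
Qed.

Lemma delta_rising k : delta (rising k.+1) = k.+1%:R *: rising k.
Proof.
rewrite /delta rising_shift [rising k.+1]/= mulrC -mulrBl opprB addrC addrA subrK.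
by rewrite -polyC1 -polyCD addrC natr1 mul_polyC.
Qed.

Lemma delta_surj f : exists u, delta u = f.
Proof.
elim: {f}(size f) {-2}f (leqnn (size f)) => [|n IH] f size_f.
  by exists 0; move: size_f; rewrite size_poly_leq0 linear0 => /eqP->.
have [|lt_n_f] := leqP (size f) n; first exact: IH.
have {lt_n_f}{}size_f : size f = n.+1 by apply/eqP; rewrite eqn_leq size_f.
pose c := lead_coef f.
have [u' delta_u'] : exists u', delta u' = f - c *: rising n.
  apply: IH; have := @size_sub_lead f (c *: rising n); rewrite size_f; apply.
  - by rewrite size_scale ?size_rising // lead_coef_eq0 -size_poly_eq0 size_f.
  - by rewrite lead_coefZ (monicP (rising_monic n)) mulr1.
exists (u' + (c / n.+1%:R) *: rising n.+1).
by rewrite linearD linearZ /= delta_u' delta_rising scalerA divfK ?pnatr_eq0 ?subrK.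
Qed.

End Difference.

Section WhittakerModule.
Variables (K : numClosedFieldType) (V : lmodType K) (E F H : {linear V -> V}).
Variables (f u : {poly K}) (a : K) (w : V).
Hypotheses (V_R : R_module f E F H) (a_neq0 : a != 0) (Ew : whittaker_vector E a w)
  (delta_u : delta u = f).
Implicit Types (p : {poly K}) (Q : {poly {poly K}}).

Lemma E_H v : E (H v) = H (E v) + (-1) *: E v.
Proof. by case: V_R => _ [HE _]; rewrite scaleN1r -{2}(HE v) opprB addrC subrK. Qed.

Lemma F_H v : F (H v) = H (F v) + 1 *: F v.
Proof.
by case: V_R => _ [_ HF]; rewrite scale1r -{2}[F v]opprK -(HF v) opprB addrC subrK.
Qed.

Lemma E_F v : E (F v) = F (E v) + poly_op f H v.
Proof. by case: V_R => EF _; rewrite -EF addrC subrK. Qed.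

Lemma E_poly_op p v : E (poly_op p H v) = poly_op (p \Po ('X - 1)) H (E v).
Proof. by rewrite (poly_op_shift _ _ E_H) polyCN polyC1. Qed.

Lemma F_poly_op p v : F (poly_op p H v) = poly_op (p \Po ('X + 1)) H (F v).
Proof. by rewrite (poly_op_shift _ _ F_H) polyC1. Qed.

(* The hypothesis delta u = f is exactly what makes casimir central. *)
Definition casimir : {linear V -> V} := F \o E \+ poly_op u H.

Lemma casimirE v : casimir v = F (E v) + poly_op u H v.
Proof. by []. Qed.

Lemma casimir_H v : casimir (H v) = H (casimir v).
Proof.
rewrite !casimirE E_H scaleN1r linearB F_H scale1r addrK linearD.
by rewrite (poly_op_commute _ _ (fun _ => erefl)).
Qed.

Lemma casimir_E v : casimir (E v) = E (casimir v).
Proof.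
rewrite !casimirE linearD E_F E_poly_op -addrA -poly_opD.
by rewrite -delta_u /delta subrK.
Qed.

Lemma casimir_F v : casimir (F v) = F (casimir v).
Proof.
rewrite !casimirE E_F !linearD !F_poly_op -addrA -poly_opD.
rewrite -delta_u /delta linearB /= -comp_polyA comp_polyB comp_polyX.
by rewrite -polyC1 comp_polyC addrK comp_polyXr subrK.
Qed.

Lemma F_w : F w = a^-1 *: (casimir w - poly_op u H w).
Proof. by rewrite casimirE addrK Ew linearZ scalerA mulVf ?scale1r. Qed.

(* Q(Ω, H) x: Q is read as a polynomial in Ω with coefficients in K[H]. *)
Definition poly2_op (Q : {poly {poly K}}) (x : V) : V :=
  \sum_(k < size Q) iter k casimir (poly_op Q`_k H x).

Fact poly2_op_is_linear Q : linear (poly2_op Q).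
Proof.
move=> c x y; rewrite /poly2_op scaler_sumr -big_split.
by apply: eq_bigr => k _; rewrite !linearP.
Qed.
HB.instance Definition _ Q :=
  GRing.isLinear.Build K V V *:%R (poly2_op Q) (poly2_op_is_linear Q).

Lemma poly2_opZr Q c x : poly2_op Q (c *: x) = c *: poly2_op Q x.
Proof. exact: linearZ. Qed.

Lemma poly2_opBr Q x y : poly2_op Q (x - y) = poly2_op Q x - poly2_op Q y.
Proof. exact: linearB. Qed.

Lemma poly2_op_widen Q n x : (size Q <= n)%N ->
  poly2_op Q x = \sum_(k < n) iter k casimir (poly_op Q`_k H x).
Proof.
move=> le_Q_n; rewrite /poly2_op.
rewrite (big_ord_widen n (fun k => iter k casimir (poly_op Q`_k H x)) le_Q_n).
rewrite big_mkcond; apply: eq_bigr => k _ /=.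
by case: ltnP => // le_Q_k; rewrite nth_default // poly_op0 linear0.
Qed.

Lemma poly2_op0 x : poly2_op 0 x = 0.
Proof. by rewrite /poly2_op size_poly0 big_ord0. Qed.

Lemma poly2_op1 x : poly2_op 1 x = x.
Proof. by rewrite /poly2_op size_poly1 big_ord1 coef1 poly_op1. Qed.

Lemma poly2_opD Q1 Q2 x : poly2_op (Q1 + Q2) x = poly2_op Q1 x + poly2_op Q2 x.
Proof.
pose n := maxn (size Q1) (size Q2).
rewrite !(@poly2_op_widen _ n) ?leq_maxl ?leq_maxr ?(leq_trans (size_polyD _ _)) //.
by rewrite -big_split; apply: eq_bigr => k _; rewrite coefD poly_opD linearD.
Qed.

Lemma poly2_opB Q1 Q2 x : poly2_op (Q1 - Q2) x = poly2_op Q1 x - poly2_op Q2 x.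
Proof.
pose n := maxn (size Q1) (size Q2).
rewrite !(@poly2_op_widen _ n) ?leq_maxl ?leq_maxr
  ?(leq_trans (size_polyD _ _)) ?size_polyN //.
by rewrite -sumrB; apply: eq_bigr => k _; rewrite coefB poly_opB linearB.
Qed.

Lemma poly2_opZ p Q x : poly2_op (p *: Q) x = poly2_op Q (poly_op p H x).
Proof.
rewrite (@poly2_op_widen _ (size Q)) ?size_scale_leq //.
by apply: eq_bigr => k _; rewrite coefZ mulrC poly_opM.
Qed.

Lemma poly2_opMX Q x : poly2_op (Q * 'X) x = casimir (poly2_op Q x).
Proof.
rewrite (@poly2_op_widen _ (size Q).+1); last first.
  by have [->|Q_neq0] := eqVneq Q 0; rewrite ?mul0r ?size_poly0 ?size_mulX.
rewrite big_ord_recl coefMX eqxx poly_op0 linear0 add0r linear_sum.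
by apply: eq_bigr => k _; rewrite lift0 coefMX iterS.
Qed.

Lemma poly2_op_commute (S : {linear V -> V}) Q x :
  (forall y, casimir (S y) = S (casimir y)) -> (forall y, S (H y) = H (S y)) ->
  S (poly2_op Q x) = poly2_op Q (S x).
Proof.
move=> S_casimir S_H; rewrite linear_sum; apply: eq_bigr => k _.
rewrite iter_commute => [|y]; last by rewrite S_casimir.
by rewrite poly_op_commute.
Qed.

Lemma poly2_op_shift (S : {linear V -> V}) (c : K) Q x :
  (forall y, casimir (S y) = S (casimir y)) ->
  (forall y, S (H y) = H (S y) + c *: S y) ->
  S (poly2_op Q x) = poly2_op (map_poly (comp_poly ('X + c%:P)) Q) (S x).
Proof.
move=> S_casimir S_H; rewrite [RHS](@poly2_op_widen _ (size Q)); last exact: size_poly.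
rewrite linear_sum; apply: eq_bigr => k _.
rewrite iter_commute => [|y]; last by rewrite S_casimir.
by rewrite (poly_op_shift _ _ S_H) coef_map.
Qed.

Lemma poly2_op_E Q :
  E (poly2_op Q w) = a *: poly2_op (map_poly (comp_poly ('X - 1)) Q) w.
Proof. by rewrite (poly2_op_shift _ _ casimir_E E_H) Ew poly2_opZr polyCN polyC1. Qed.

Lemma poly2_op_R_submodule :
  R_submodule E F H (fun v => exists Q, v = poly2_op Q w).
Proof.
split=> [|v1 v2 [Q1 ->] [Q2 ->]|c v [Q ->]|]; first by exists 0; rewrite poly2_op0.
- by exists (Q1 + Q2); rewrite poly2_opD.
- by exists (c%:P *: Q); rewrite poly2_opZ poly_opC poly2_opZr.
split=> v [Q ->].
- exists (a%:P *: map_poly (comp_poly ('X - 1)) Q).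
  by rewrite poly2_opZ poly_opC poly2_opZr poly2_op_E.
- pose Q' := map_poly (comp_poly ('X + 1)) Q.
  exists (a^-1%:P *: (Q' * 'X - u *: Q')).
  rewrite poly2_opZ poly_opC poly2_opZr poly2_opB poly2_opZ poly2_opMX.
  rewrite (poly2_op_shift _ _ casimir_F F_H) polyC1 F_w poly2_opZr poly2_opBr.
  by rewrite (poly2_op_commute _ _ (fun y => erefl) casimir_H).
- exists ('X *: Q); rewrite poly2_opZ poly_opX.
  by rewrite (poly2_op_commute _ _ casimir_H (fun y => erefl)).
Qed.

Lemma poly2_op_span :
  (forall v, cyc E F H w v) -> forall v, exists Q, v = poly2_op Q w.
Proof.
move=> cyc_w v; apply: (R_submodule_cyc poly2_op_R_submodule _ (cyc_w v)).
by exists 1; rewrite poly2_op1.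
Qed.

Lemma poly2_op_delta Q : poly2_op Q w = 0 -> poly2_op (map_poly delta Q) w = 0.
Proof.
move=> Qw0; pose Q' := map_poly (comp_poly ('X - 1)) Q.
have /eqP : a *: poly2_op Q' w = 0 by rewrite -poly2_op_E Qw0 linear0.
rewrite scaler_eq0 (negbTE a_neq0) => /eqP Q'w0.
have -> : map_poly delta Q = Q - Q' by apply/polyP => k; rewrite coefB !coef_map.
by rewrite poly2_opB Qw0 Q'w0 subrr.
Qed.

Lemma poly2_op_polyC q x : poly2_op q^:P x = poly_op q casimir x.
Proof.
rewrite /poly2_op size_map_polyC; apply: eq_bigr => k _.
by rewrite coef_map /= poly_opC linearZ.
Qed.

Lemma poly2_op_annihilator Q : Q != 0 -> poly2_op Q w = 0 ->
  exists2 q, q != 0 & poly_op q casimir w = 0.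
Proof.
elim: {Q}(sizeY Q) {-2}Q (leqnn (sizeY Q)) => [|d IH] Q size_Q Q_neq0 Qw0.
  case/negP: Q_neq0; apply/eqP/polyP => k; rewrite coef0; apply/eqP.
  by rewrite -size_poly_leq0 (leq_trans (max_size_coefXY _ _)).
have [deltaQ0|deltaQ_neq0] := eqVneq (map_poly delta Q) 0; last first.
  apply: IH deltaQ_neq0 (poly2_op_delta Qw0); apply/bigmax_leqP => k _.
  rewrite coef_map (leq_trans (size_delta _)) //.
  by have := leq_trans (max_size_coefXY Q k) size_Q; case: (size _).
have Q_const : Q = (map_poly (coefp 0) Q)^:P.
  apply/polyP => k; rewrite !coef_map /=; apply: size1_polyC; apply: delta_eq0.
  by rewrite -(coef_map delta) deltaQ0 coef0.
exists (map_poly (coefp 0) Q).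
  by apply: contraNneq Q_neq0 => q0; rewrite Q_const q0 map_poly0.
by rewrite -poly2_op_polyC -Q_const.
Qed.

Lemma casimir_scalar : irreducible_R E F H -> (forall v, cyc E F H w v) ->
  exists lam, forall v, casimir v = lam *: v.
Proof.
move=> irr cyc_w; have w_neq0 := cyclic_generator_neq0 irr cyc_w.
have := irr.2 _ (image_R_submodule casimir_E casimir_F casimir_H).
case=> [casimir0|casimir_onto].
  by exists 0 => v; rewrite scale0r; apply: casimir0; exists v.
have [x w_eq] := casimir_onto w; have [Q x_eq] := poly2_op_span cyc_w x.
have Q1_neq0 : 1 - Q * 'X != 0.
  apply/eqP => /(congr1 (coefp 0)) /=.
  by rewrite coefB coef1 coefMX /= subr0 coef0 => /eqP; rewrite oner_eq0.
have Q1w0 : poly2_op (1 - Q * 'X) w = 0.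
  by rewrite poly2_opB poly2_op1 poly2_opMX -x_eq -w_eq subrr.
have [q q_neq0 qw0] := poly2_op_annihilator Q1_neq0 Q1w0.
have [lam [y [y_neq0 Cy]]] := poly_op_eigenvector q_neq0 w_neq0 qw0.
exists lam.
exact: (central_eigenvector_scalar casimir_E casimir_F casimir_H irr y_neq0 Cy).
Qed.

Lemma poly_op_H_w_eq0 p : w != 0 -> poly_op p H w = 0 -> p = 0.
Proof.
move=> w_neq0; elim: {p}(size p) {-2}p (leqnn (size p)) => [|n IH] p size_p pw0.
  by apply/eqP; rewrite -size_poly_leq0.
have /eqP : a *: poly_op (p \Po ('X - 1)) H w = 0.
  by rewrite -linearZ /= -Ew -E_poly_op pw0 linear0.
rewrite scaler_eq0 (negbTE a_neq0) => /eqP shift_pw0.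
have /delta_eq0 size_p1 : delta p = 0.
  apply: IH; last by rewrite poly_opB pw0 shift_pw0 subrr.
  by apply: leq_trans (size_delta p) _; case: (size p) size_p.
move: pw0; rewrite (size1_polyC size_p1) poly_opC => /eqP.
by rewrite scaler_eq0 (negbTE w_neq0) orbF => /eqP ->.
Qed.

Lemma poly_op_H_w_span lam : (forall v, cyc E F H w v) -> casimir w = lam *: w ->
  forall v, exists p, v = poly_op p H w.
Proof.
move=> cyc_w casimir_w.
suff S_sub : R_submodule E F H (fun v => exists p, v = poly_op p H w).
  by move=> v; apply: (R_submodule_cyc S_sub _ (cyc_w v)); exists 1; rewrite poly_op1.
split=> [|v1 v2 [p1 ->] [p2 ->]|c x [p ->]|]; first by exists 0; rewrite poly_op0.
- by exists (p1 + p2); rewrite poly_opD.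
- by exists (c *: p); rewrite poly_opZ.
split=> x [p ->].
- by exists (a *: (p \Po ('X - 1))); rewrite E_poly_op Ew poly_opZ linearZ.
- exists ((p \Po ('X + 1)) * (a^-1 *: (lam%:P - u))).
  by rewrite poly_opM F_poly_op F_w casimir_w poly_opZ poly_opB poly_opC.
- by exists (p * 'X); rewrite poly_opMX poly_op_commute.
Qed.

Theorem whittaker_basis : irreducible_R E F H -> (forall v, cyc E F H w v) ->
  is_basis (fun n => iter n H w).
Proof.
move=> irr cyc_w; have w_neq0 := cyclic_generator_neq0 irr cyc_w.
have [lam casimir_lam] := casimir_scalar irr cyc_w.
apply: is_basis_iter => [p|]; first exact: poly_op_H_w_eq0.
exact: poly_op_H_w_span cyc_w (casimir_lam w).
Qed.

End WhittakerModule.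

Theorem mainTheorem9 (R : realType) (f : {poly R[i]}) (a : R[i]) (V : lmodType R[i])
  (E F H : {linear V -> V}) (w : V) :
  R_module f E F H -> a != 0 ->
  irreducible_R E F H -> whittaker_module E F H a w ->
  is_basis (fun n => iter n H w).
Proof.
move=> V_R a_neq0 irr [Ew cyc_w]; have [u delta_u] := delta_surj f.
exact: whittaker_basis V_R a_neq0 Ew delta_u irr cyc_w.
Qed.
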